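(* Let $b\ge3$ be an integer and $D \subset \{0,\ldots,b-1\}$ with $2\le\#D\le b-1$; let $C(b,D)$ be the corresponding generalized Cantor set with Hausdorff dimension $\gamma=\log\#D/\log b$, and let $m = \min\{ \min D, b-1-\max D \}$. Let $A=(a_{n})_{n \geq 1}$ be an unbounded non-decreasing sequence of positive integers, let $f$ be a dimension function such that $r\mapsto r^{-\gamma} f(r)$ is monotonic, and let $\psi : \mathbb{N} \to (0,\infty)$. If $$\sum_{i \in I \colon \psi_{A}(i) > \frac{m}{(b-1) b^{ i }}} f\left(\psi_{A}(i) - \frac{m}{(b-1) b^{i}}\right) b^{i \gamma } < \infty,$$ then $\mathcal{H}^{f} (W_{b,A}(\psi) \cap C(b,D))= 0$.
   Context: $C(b,D)$ is the set of $x \in [0,1]$ whose base-$b$ expansion uses only digits from $D$. A dimension function is a continuous, non-decreasing $f:(0,\infty)\to(0,\infty)$ with $\lim_{r\to0}f(r)=0$; $\mathcal{H}^f$ is the Hausdorff $f$-measure. $W_{b,A}(\psi) = \{x \in [0,1] : |x - p/b^{a_n}| < \psi(n) \text{ for infinitely many } (p,n) \in \mathbb{N}^2\}$; $I = \{i\in\mathbb{N} : a_n = i \text{ for some } n\}$; for $i\in I$, $\psi_A(i) = \max\{\psi(n) : a_n = i\}$. *)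

From HB Require Import structures.
From mathcomp Require Import all_boot all_order all_algebra.
From mathcomp Require Import all_classical all_reals all_analysis.
Set Implicit Arguments. Unset Strict Implicit. Unset Printing Implicit Defensive.
Import Order.TTheory GRing.Theory Num.Theory.
Import numFieldNormedType.Exports.
Local Open Scope classical_set_scope.
Local Open Scope ring_scope.

Definition cantor_set (R : realType) (b : nat) (D : {set 'I_b}) : set R :=
  [set x : R | 0 <= x <= 1 /\
     exists d : nat -> 'I_b, (forall k, d k \in D) /\
       (fun N => \sum_(k < N) ((d k : nat)%:R / (b%:R ^+ k.+1) : R)) @ \oo --> x].

Definition W_set (R : realType) (b : nat) (a : nat -> nat) (psi : nat -> R)
  : set R :=
  [set x : R | 0 <= x <= 1 /\
     infinite_set [set pn : nat * nat | (0 < pn.2)%N /\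
        `| x - (pn.1)%:R / (b%:R ^+ a pn.2) | < psi pn.2]].

Definition idx_set (a : nat -> nat) : set nat :=
  [set i | exists2 n, (0 < n)%N & a n = i].

(* psi_A(i) = max { psi n : a_n = i } (a finite set for i in I) *)
Definition psiA (R : realType) (a : nat -> nat) (psi : nat -> R) (i : nat) : R :=
  sup [set psi n | n in [set n | (0 < n)%N /\ a n = i]].

Definition dimension_function (R : realType) (f : R -> R) : Prop :=
  {within `]0, +oo[, continuous f} /\
  {in `]0, +oo[ &, {homo f : x y / x <= y}} /\
  (forall r, 0 < r -> 0 < f r) /\
  f r @[r --> 0^'+] --> 0.

Definition monotonic_pos (R : realType) (g : R -> R) : Prop :=
  {in `]0, +oo[ &, {homo g : x y / x <= y}} \/
  {in `]0, +oo[ &, {homo g : x y /~ x <= y}}.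

(* Diameter of a subset of R (as an extended real; -oo for the empty set). *)
Definition diam (R : realType) (U : set R) : \bar R :=
  ereal_sup [set (`|x - y|)%:E | x in U & y in U].

(* f(diam U), with the usual convention f(0) = 0 (f extended by its limit 0). *)
Definition fdiam (R : realType) (f : R -> R) (U : set R) : \bar R :=
  if (0 < diam U)%E then (f (fine (diam U)))%:E else 0%E.

Definition hausdorff_delta (R : realType) (f : R -> R) (delta : R) (E : set R)
  : \bar R :=
  ereal_inf [set (\sum_(k <oo) fdiam f (U k))%E |
     U in [set U : nat -> set R |
       E `<=` \bigcup_k U k /\ forall k, (diam (U k) <= delta%:E)%E]].

(* H^f(E) = lim_{delta -> 0} H^f_delta(E) = sup_{delta > 0} H^f_delta(E) *)
Definition hausdorff_measure (R : realType) (f : R -> R) (E : set R) : \bar R :=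
  ereal_sup [set hausdorff_delta f delta E | delta in `]0, +oo[].

From HB Require Import structures.
From mathcomp Require Import all_boot all_order all_algebra.
From mathcomp Require Import all_classical all_reals all_analysis.
From mathcomp Require Import ring lra zify.
Import Order.TTheory GRing.Theory Num.Theory.
Import numFieldNormedType.Exports.
Local Open Scope classical_set_scope.
Local Open Scope ring_scope.

(* Points of C(b,D) whose expansion starts with a given word of i digits lie in
   [c, c + b^-i], c the value of the word, and since every later digit lies in
   [m, b-1-m] they stay at distance at least m/((b-1) b^i) from both endpoints.
   A point of W_{b,A}(psi) is, for infinitely many i = a_n, within
   psi(n) <= psi_A(i) of some p/b^i, hence within psi_A(i) of an endpoint of its
   own level-i interval.  So for every N the sets "cylinder of a word meets the
   psi_A(i)-neighbourhood of one of its endpoints", i >= N, cover W /\ C; at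
   level i there are 2 #D^i = 2 b^(i gamma) of them, of diameter at most
   psi_A(i) - m/((b-1) b^i), and the convergent series makes their total f-cost
   arbitrarily small (Hausdorff-Cantelli). *)

Section diameter.
Context {R : realType}.
Implicit Types (U : set R) (f : R -> R).

Lemma diam_le U (L : R) :
  (forall x y, U x -> U y -> `|x - y| <= L) -> (diam U <= L%:E)%E.
Proof.
by move=> UL; apply: ge_ereal_sup => _ [x Ux [y Uy <-]]; rewrite lee_fin UL.
Qed.

Lemma le_diam {U V} : U `<=` V -> (diam U <= diam V)%E.
Proof.
by move=> UV; apply: le_ereal_sup => _ [x /UV Vx [y /UV Vy <-]]; exists x => //; exists y.
Qed.

Lemma diam_set0 (L : R) : (diam set0 <= L%:E)%E.
Proof. by apply: diam_le => x y []. Qed.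

Lemma diam_le_itv U (lo hi : R) :
  (forall x, U x -> lo <= x <= hi) -> (diam U <= (hi - lo)%:E)%E.
Proof.
move=> Uitv; apply: diam_le => x y /Uitv/andP[x_ge x_le] /Uitv/andP[y_ge y_le].
by rewrite ler_norml; apply/andP; split; lra.
Qed.

Lemma fdiam_set0 f : fdiam f set0 = 0%E.
Proof. by rewrite /fdiam ltNge (diam_set0 0). Qed.

Lemma fdiam_ge0 {f U} {L : R} : (forall r, 0 < r -> 0 < f r) ->
  (diam U <= L%:E)%E -> (0 <= fdiam f U)%E.
Proof.
move=> f_gt0; rewrite /fdiam; case: ifPn => //.
by case: (diam U) => [r| |] //= r_gt0 _; rewrite lee_fin ltW ?f_gt0 -?lte_fin.
Qed.

Lemma fdiam_le f U (L : R) : 0 < L -> (forall r, 0 < r -> 0 < f r) ->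
  {in `]0, +oo[ &, {homo f : x y / x <= y}} ->
  (diam U <= L%:E)%E -> (fdiam f U <= (f L)%:E)%E.
Proof.
move=> L_gt0 f_gt0 f_mono; rewrite /fdiam; case: ifPn => [|_ _].
  case: (diam U) => [r| |] //= r_gt0 rL; rewrite lee_fin.
  by apply: f_mono; rewrite ?in_itv /= ?andbT -?lte_fin -?lee_fin.
by rewrite lee_fin ltW ?f_gt0.
Qed.

Lemma hausdorff_measure_eq0 f (E : set R) : (forall r, 0 < r -> 0 < f r) ->
  (forall delta e : R, 0 < delta -> 0 < e -> exists U : nat -> set R,
    [/\ E `<=` \bigcup_k U k, forall k, (diam (U k) <= delta%:E)%E
      & (\sum_(k <oo) fdiam f (U k) <= e%:E)%E]) ->
  hausdorff_measure f E = 0%E.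
Proof.
move=> f_gt0 small_covers.
have Hf_delta_ge0 delta : (0 <= hausdorff_delta f delta E)%E.
  apply: le_ereal_inf_tmp => _ [U [_ U_delta] <-].
  by apply: nneseries_ge0 => k _ _; exact: fdiam_ge0 (U_delta k).
apply/eqP; rewrite /hausdorff_measure eq_le; apply/andP; split; last first.
  apply: le_trans (Hf_delta_ge0 1) _; apply: ereal_sup_ubound.
  by exists 1; rewrite //= in_itv /= ltr01.
apply: ge_ereal_sup => _ [delta delta_pos <-].
have delta_gt0 : 0 < delta by move: delta_pos; rewrite /= in_itv /= andbT.
apply/lee_addgt0Pr => e e_gt0; rewrite add0e.
have [U [EU U_delta U_sum]] := small_covers delta e delta_gt0 e_gt0.
by apply: le_trans U_sum; apply: ereal_inf_lbound; exists U.
Qed.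

End diameter.

Section enumerate_levels.
Context {T : Type} {I : nat -> finType} (V : forall i, I i -> set T).

Let level i : seq (set T) := set0 :: [seq V i x | x <- enum (I i)].
Let prefix n := flatten [seq level i | i <- iota 0 n].

(* The leading [set0] of each level makes [prefix n] have length at least [n],
   so that the [k]-th entry is already fixed in [prefix k.+1]. *)
Definition enum_levels k := nth set0 (prefix k.+1) k.

Let prefixD n p :
  prefix (n + p) = prefix n ++ flatten [seq level i | i <- iota n p].
Proof. by rewrite /prefix iotaD map_cat flatten_cat. Qed.

Let prefixS n : prefix n.+1 = prefix n ++ level n.
Proof. by rewrite -addn1 prefixD /= cats0. Qed.

Let size_prefix n : (n <= size (prefix n))%N.
Proof.
elim: n => [|n IHn] //; rewrite prefixS size_cat /= addnS ltnS.
exact: leq_trans IHn (leq_addr _ _).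
Qed.

Let nth_prefix_le n n' k : (n <= n')%N -> (k < size (prefix n))%N ->
  nth set0 (prefix n') k = nth set0 (prefix n) k.
Proof.
by move=> /subnKC <- k_lt; rewrite prefixD nth_cat k_lt.
Qed.

Let enum_levels_prefix n k : (k < size (prefix n))%N ->
  enum_levels k = nth set0 (prefix n) k.
Proof.
move=> k_lt; rewrite /enum_levels; case: (leqP k.+1 n) => [kn|nk].
  by rewrite (nth_prefix_le _ _ _ kn) // (leq_trans _ (size_prefix k.+1)).
by rewrite (nth_prefix_le _ _ _ (ltnW nk) k_lt).
Qed.

Let nth_prefix_ind (P : set T -> Prop) : P set0 -> (forall i x, P (V i x)) ->
  forall n k, P (nth set0 (prefix n) k).
Proof.
move=> P0 PV; elim=> [|n IHn] k; first by rewrite nth_nil.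
rewrite prefixS nth_cat; case: ifP => _; first exact: IHn.
case: (k - _)%N => [|j] //=.
case: (ltnP j (size (enum (I n)))) => [|j_ge]; last by rewrite nth_default // size_map.
by case: (enum (I n)) => // x0 s j_lt; rewrite (nth_map x0).
Qed.

Lemma enum_levels_ind (P : set T -> Prop) : P set0 -> (forall i x, P (V i x)) ->
  forall k, P (enum_levels k).
Proof. by move=> P0 PV k; exact: nth_prefix_ind. Qed.

Lemma enum_levels_hit i x : exists k, enum_levels k = V i x.
Proof.
have x_enum : x \in enum (I i) by rewrite mem_enum.
exists (size (prefix i) + (index x (enum (I i))).+1)%N.
rewrite (@enum_levels_prefix i.+1); last first.
  by rewrite prefixS size_cat ltn_add2l /= ltnS size_map index_mem.
by rewrite prefixS nth_cat ltnNge leq_addr /= addKn /= (nth_map x) ?index_mem ?nth_index.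
Qed.

Lemma enum_levels_sum {R : realType} {g : set T -> \bar R} :
  g set0 = 0%E -> (forall i x, (0 <= g (V i x))%E) -> forall n,
  (\sum_(k < n) g (enum_levels k) <= \sum_(i < n) \sum_(x : I i) g (V i x))%E.
Proof.
move=> g0 gV_ge0 n.
have -> : (\sum_(i < n) \sum_(x : I i) g (V i x) = \sum_(X <- prefix n) g X)%E.
  have iota_n : iota 0 n = index_iota 0 n by rewrite /index_iota subn0.
  rewrite big_flatten big_map iota_n big_mkord.
  apply: eq_bigr => i _.
  by rewrite big_cons g0 big_map big_enum; symmetry; apply: add0r.
rewrite (big_nth set0) (@big_cat_nat _ _ _ n 0 (size (prefix n))) ?size_prefix //=.
rewrite big_mkord; under eq_bigr => k _.
  by rewrite (enum_levels_prefix _ _ (leq_trans (ltn_ord k) (size_prefix n))) over.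
apply: leeDl; apply: sume_ge0 => k _.
by apply: (nth_prefix_ind (fun X => 0 <= g X)%E) => //; rewrite g0.
Qed.

End enumerate_levels.

Lemma hausdorff_cantelli {R : realType} {f : R -> R} (E : set R)
    {I : nat -> finType} (V : forall i, I i -> set R) (r : nat -> R) :
  (forall x, 0 < x -> 0 < f x) -> r @ \oo --> 0 ->
  (forall i x, (diam (V i x) <= (r i)%:E)%E) ->
  (\sum_(i <oo) \sum_(x : I i) fdiam f (V i x) < +oo)%E ->
  (forall z, E z -> forall N, exists2 i, (N <= i)%N & exists x, V i x z) ->
  hausdorff_measure f E = 0%E.
Proof.
move=> f_gt0 r_cvg0 V_diam sum_fin E_limsup.
pose cost i := (\sum_(x : I i) fdiam f (V i x))%E.
have cost_ge0 i : (0 <= cost i)%E.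
  by apply: sume_ge0 => x _; exact: fdiam_ge0 (V_diam i x).
apply: hausdorff_measure_eq0 => // delta e delta_gt0 e_gt0.
have tail_small : \forall N \near \oo, (\sum_(N <= i <oo) cost i <= e%:E)%E.
  have /fine_cvgP[tail_fin /cvgr_lt/(_ _ e_gt0) tail_lt] :=
    nneseries_tail_cvg sum_fin (fun i _ => cost_ge0 i).
  by apply: filterS2 tail_fin tail_lt => N N_fin N_lt; rewrite -(fineK N_fin) lee_fin ltW.
have r_small : \forall N \near \oo, forall i, (N <= i)%N -> r i <= delta.
  have [N0 _ N0_r] := cvgr_lt _ r_cvg0 _ delta_gt0.
  by exists N0 => // N N0N i Ni; apply/ltW/N0_r/(leq_trans N0N).
have [N [tail_N r_N]] := filter_ex (filterI tail_small r_small).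
pose W i x := if (N <= i)%N then V i x else set0.
have W_diam i x : (diam (W i x) <= delta%:E)%E.
  rewrite /W; case: ifP => [Ni|_]; last exact: diam_set0.
  by apply: le_trans (V_diam i x) _; rewrite lee_fin r_N.
have U_diam k : (diam (enum_levels W k) <= delta%:E)%E.
  by apply: (enum_levels_ind W (fun X => diam X <= delta%:E)%E) => //; exact: diam_set0.
exists (enum_levels W); split => //.
- move=> z /E_limsup/(_ N)[i Ni [x Vxz]]; have [k Wk] := enum_levels_hit W i x.
  by exists k => //; rewrite Wk /W Ni.
- apply: lime_le; first by apply: is_cvg_nneseries => k _ _; exact: fdiam_ge0 f_gt0 (U_diam k).
  apply: nearW => n; rewrite big_mkord.
  have W_cost_ge0 i x : (0 <= fdiam f (W i x))%E := fdiam_ge0 f_gt0 (W_diam i x).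
  apply: le_trans (enum_levels_sum W (fdiam_set0 f) W_cost_ge0 n) _.
  apply: le_trans tail_N; rewrite eseries_cond.
  have -> : (\sum_(i < n) \sum_(x : I i) fdiam f (W i x)
             = \sum_(0 <= i < n | true && (N <= i)%N) cost i)%E.
    rewrite big_mkord [RHS]big_mkcond /=; apply: eq_bigr => i _; rewrite /W /cost.
    by case: ifP => // _; apply: big1 => x _; exact: fdiam_set0.
  exact: nneseries_lim_ge.
Qed.

Lemma sum_geometric_inv {R : numFieldType} (b i n : nat) : (1 < b)%N -> (i <= n)%N ->
  \sum_(i <= k < n) (b%:R ^+ k.+1)^-1
    = ((b.-1)%:R * b%:R ^+ i)^-1 - ((b.-1)%:R * b%:R ^+ n)^-1 :> R.
Proof.
move=> b_gt1 i_le_n.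
have b1E : (b.-1)%:R = b%:R - 1 :> R.
  by rewrite -[X in _ = X%:R - 1](prednK (ltnW b_gt1)) -natr1 addrK.
have b_neq0 : b%:R != 0 :> R by rewrite pnatr_eq0 -lt0n ltnW.
have b1_neq0 : b%:R - 1 != 0 :> R by rewrite -b1E pnatr_eq0 -lt0n -ltnS prednK // ltnW.
pose u k : R := - ((b.-1)%:R * b%:R ^+ k)^-1.
rewrite (eq_bigr (fun k => u k.+1 - u k)) ?telescope_sumr // ?/u; first by rewrite addrC opprK.
move=> k _; rewrite /u exprS b1E; field.
by rewrite b_neq0 b1_neq0 expf_neq0.
Qed.

Lemma digit_series_tail {R : realType} {b : nat} {u : nat -> R} {lo hi x : R} (i : nat) :
  (1 < b)%N -> (forall k, lo <= u k <= hi) ->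
  (fun N => \sum_(k < N) u k / b%:R ^+ k.+1) @ \oo --> x ->
  lo / ((b.-1)%:R * b%:R ^+ i) <= x - \sum_(k < i) u k / b%:R ^+ k.+1
    <= hi / ((b.-1)%:R * b%:R ^+ i).
Proof.
move=> b_gt1 u_bnd S_cvg.
set S := fun N => \sum_(k < N) u k / b%:R ^+ k.+1.
pose c N : R := ((b.-1)%:R * b%:R ^+ N)^-1.
have b_gt0 : 0 < b%:R :> R by rewrite ltr0n ltnW.
have c_cvg0 : c N @[N --> \oo] --> 0.
  have -> : c = fun N => (b.-1)%:R^-1 * (b%:R^-1) ^+ N.
    by apply/funext => N; rewrite /c invfM exprVn.
  rewrite -(mulr0 (b.-1)%:R^-1); apply: cvgMr; apply: cvg_expr.
  by rewrite ger0_norm ?invr_ge0 ?ltW // invf_lt1 // ltr1n.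
have block N : (i <= N)%N ->
    lo * (c i - c N) <= S N - S i <= hi * (c i - c N).
  move=> iN; rewrite /S -!(big_mkord xpredT (fun k => u k / b%:R ^+ k.+1)).
  rewrite (big_cat_nat (leq0n i) iN) /= addrAC subrr add0r.
  rewrite -sum_geometric_inv // !mulr_sumr.
  by apply/andP; split; apply: ler_sum => k _; rewrite ler_pM2r ?invr_gt0 ?exprn_gt0 //;
    case/andP: (u_bnd k).
have tail_cvg : (fun N => S N - S i) @ \oo --> x - S i by apply: cvgB => //; exact: cvg_cst.
have bound_cvg z : (fun N => z * (c i - c N)) @ \oo --> z * c i.
  by apply: cvgMr; rewrite -[X in _ --> X]subr0; apply: cvgB => //; exact: cvg_cst.
rewrite -/(c i) -(cvg_lim _ (bound_cvg lo)) // -(cvg_lim _ (bound_cvg hi)) //.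
rewrite -(cvg_lim _ tail_cvg) //; apply/andP; split.
  apply: ler_lim; [exact: cvgP (bound_cvg lo)|exact: cvgP tail_cvg|].
  by exists i => // N /= /block/andP[].
apply: ler_lim; [exact: cvgP tail_cvg|exact: cvgP (bound_cvg hi)|].
by exists i => // N /= /block/andP[].
Qed.


Lemma powR_nat_logb (R : realType) (b c i : nat) : (1 < b)%N -> (0 < c)%N ->
  b%:R `^ (i%:R * (ln c%:R / ln b%:R)) = (c ^ i)%:R :> R.
Proof.
move=> b_gt1 c_gt0.
have b_gt0 : 0 < b%:R :> R by rewrite ltr0n ltnW.
have lnb_gt0 : 0 < ln (b%:R : R) by apply: ln_gt0; rewrite ltr1n.
rewrite -{1}(lnK b_gt0) -expRM.
have -> : ln b%:R * (i%:R * (ln c%:R / ln b%:R)) = i%:R * ln (c%:R : R).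
  by field; rewrite gt_eqF.
by rewrite expRM_natl lnK ?natrX // posrE ltr0n.
Qed.

Lemma digit_margin {b m : nat} {D : {set 'I_b}} :
  (m <= \big[minn/b]_(d in D) (d : nat))%N ->
  (m <= b.-1 - \max_(d in D) (d : nat))%N ->
  forall k : 'I_b, k \in D -> (m <= k <= b.-1 - m)%N.
Proof.
move=> m_min m_max k kD.
have min_k : (\big[minn/b]_(d in D) (d : nat) <= k)%N.
  by rewrite -minEnat; exact: (bigmin_le_cond b (fun d : 'I_b => d : nat) kD).
have k_max : (k <= \max_(d in D) (d : nat))%N by exact: leq_bigmax_cond.
have max_b : (\max_(d in D) (d : nat) <= b.-1)%N.
  by apply/bigmax_leqP => d _; rewrite -ltnS prednK ?ltn_ord // (leq_ltn_trans _ (ltn_ord d)).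
lia.
Qed.

Lemma W_set_index_unbounded {R : realType} {b : nat} {a : nat -> nat}
    {psi : nat -> R} {x : R} :
  (0 < b)%N -> W_set b a psi x -> forall n0, exists p n,
    [/\ (n0 <= n)%N, (0 < n)%N & `|x - p%:R / b%:R ^+ a n| < psi n].
Proof.
move=> b_gt0 [_ W_inf] n0; apply: contrapT => no_large; apply: W_inf.
pose bound n := Num.Def.archi_bound ((`|x| + `|psi n|) * b%:R ^+ a n).
apply: (sub_finite_set _ (finite_setX (finite_II (\max_(n < n0) bound n)) (finite_II n0))).
move=> [p n] /= [n_gt0 close].
have n_lt : (n < n0)%N by rewrite ltnNge; apply/negP => n0n; apply: no_large; exists p, n.
split => //=; apply: (leq_trans _ (leq_bigmax (F := fun j : 'I_n0 => bound j) (Ordinal n_lt))).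
rewrite -(ltr_nat R).
have bn_gt0 : 0 < b%:R ^+ a n :> R by rewrite exprn_gt0 // ltr0n.
apply: lt_le_trans (ltW (archi_boundP _)) => /=; last by rewrite mulr_ge0 ?addr_ge0 // ltW.
rewrite -ltr_pdivrMr //; apply: le_lt_trans (_ : _ <= x + `|x - p%:R / b%:R ^+ a n|) _.
  by rewrite -lerBlDl distrC ler_norm.
exact: ler_ltD (ler_norm x) (lt_le_trans close (ler_norm _)).
Qed.

Lemma psi_le_psiA {R : realType} {a : nat -> nat} (psi : nat -> R) :
  (forall n1 n2, (0 < n1)%N -> (n1 <= n2)%N -> (a n1 <= a n2)%N) ->
  (forall M, exists2 n, (0 < n)%N & (M < a n)%N) ->
  forall n, (0 < n)%N -> psi n <= psiA a psi (a n).
Proof.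
move=> a_mono a_unbnd n n_gt0; have [n1 n1_gt0 an_lt] := a_unbnd (a n).
apply: ub_le_sup; last by exists n.
(* Indices with the same value [a n] are all below [n1], so [psi] is bounded on them. *)
exists (\sum_(k < n1) `|psi k|) => _ [k [k_gt0 ak] <-].
have k_lt : (k < n1)%N.
  by rewrite ltnNge; apply/negP => /(a_mono _ _ n1_gt0); rewrite ak leqNgt an_lt.
rewrite (bigD1 (Ordinal k_lt)) //=; apply: le_trans (ler_norm _) _.
by rewrite lerDl sumr_ge0.
Qed.

Lemma grid_endpoint_closer {R : realFieldType} (Q p : nat) {h x : R} : 0 <= h ->
  Q%:R * h <= x <= Q.+1%:R * h ->
  `|x - Q%:R * h| <= `|x - p%:R * h| \/ `|x - Q.+1%:R * h| <= `|x - p%:R * h|.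
Proof.
move=> h_ge0 /andP[Qx xQ]; have [pQ|Qp] := leqP p Q; [left|right].
- have ph : p%:R * h <= Q%:R * h by rewrite ler_wpM2r // ler_nat.
  by rewrite !ger0_norm ?subr_ge0 ?lerB // (le_trans ph).
- have ph : Q.+1%:R * h <= p%:R * h by rewrite ler_wpM2r // ler_nat.
  by rewrite !ler0_norm ?subr_le0 ?lerN2 ?lerB // (le_trans xQ).
Qed.

Section cantor_cylinders.
Context {R : realType} {b : nat} {D : {set 'I_b}} {m : nat}.
Hypothesis b_gt1 : (1 < b)%N.
Hypothesis D_margin : forall k : 'I_b, k \in D -> (m <= k <= b.-1 - m)%N.

Definition expansion (d : nat -> 'I_b) (N : nat) : R :=
  \sum_(k < N) (d k : nat)%:R / b%:R ^+ k.+1.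

Definition cantor_margin (i : nat) : R := m%:R / ((b.-1)%:R * b%:R ^+ i).

Definition cylinder (i : nat) (c : R) : set R :=
  [set x | exists2 d : nat -> 'I_b,
    (forall k, d k \in D) /\ expansion d @ \oo --> x & expansion d i = c].

Definition cylinder_end (left : bool) (i : nat) (c : R) : R :=
  if left then c else c + b%:R ^- i.

Definition cylinder_near (left : bool) (i : nat) (c t : R) : set R :=
  cylinder i c `&` [set y | `|y - cylinder_end left i c| < t].

Let b_gt0 : 0 < b%:R :> R. Proof. by rewrite ltr0n ltnW. Qed.

Lemma cantor_margin_ge0 i : 0 <= cantor_margin i.
Proof. by rewrite divr_ge0 // mulr_ge0 // exprn_ge0 // ltW. Qed.

Lemma cylinder_bounds {i c x} : cylinder i c x ->
  c + cantor_margin i <= x <= c + b%:R ^- i - cantor_margin i.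
Proof.
move=> [d [dD d_cvg] <-].
have m_le : (m <= b.-1)%N.
  by have /D_margin/andP[mk kb] := dD 0%N; rewrite (leq_trans mk) // (leq_trans kb) ?leq_subr.
pose lo : R := m%:R; pose hi : R := (b.-1 - m)%:R.
have digit_bnd k : lo <= (d k : nat)%:R <= hi by rewrite !ler_nat; exact: D_margin.
have /andP[x_lo x_hi] := digit_series_tail i b_gt1 digit_bnd d_cvg.
have top : hi / ((b.-1)%:R * b%:R ^+ i) = b%:R ^- i - cantor_margin i.
  have b1_neq0 : (b.-1)%:R != 0 :> R by rewrite pnatr_eq0 -lt0n -ltnS prednK // ltnW.
  by rewrite /cantor_margin /hi natrB //; field; rewrite b1_neq0 expf_neq0 // gt_eqF.
rewrite -/(cantor_margin i) -/(expansion d i) in x_lo.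
rewrite top -/(expansion d i) in x_hi.
by apply/andP; split; lra.
Qed.

Lemma cylinder_near_margin {left i c t x} : cylinder_near left i c t x ->
  cantor_margin i < t.
Proof.
move=> [/cylinder_bounds/andP[lo hi] /= near_x]; apply: le_lt_trans near_x.
have m_ge0 := cantor_margin_ge0 i.
by case: left; rewrite /cylinder_end; [rewrite ger0_norm|rewrite distrC ger0_norm]; lra.
Qed.

Lemma diam_cylinder_near left i c t :
  (diam (cylinder_near left i c t) <= (t - cantor_margin i)%:E)%E.
Proof.
case: left.
- apply: le_trans (diam_le_itv _ (c + cantor_margin i) (c + t) _) _.
    move=> x [/cylinder_bounds/andP[x_lo _]].
    by rewrite /= /cylinder_end ltr_norml => /andP[_ ?]; apply/andP; split; lra.
  by rewrite lee_fin; lra.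
- apply: le_trans (diam_le_itv _ (c + b%:R ^- i - t) (c + b%:R ^- i - cantor_margin i) _) _.
    move=> x [/cylinder_bounds/andP[_ x_hi]].
    by rewrite /= /cylinder_end ltr_norml => /andP[? _]; apply/andP; split; lra.
  by rewrite lee_fin; lra.
Qed.

Lemma diam_cylinder_near_scale left i c t :
  (diam (cylinder_near left i c t) <= (b%:R ^- i)%:E)%E.
Proof.
apply: le_trans (le_diam (@subIsetl _ _ _)) _.
apply: le_trans (diam_le_itv _ c (c + b%:R ^- i) _) _; last by rewrite addrAC subrr add0r.
by move=> x /cylinder_bounds; have := cantor_margin_ge0 i; lra.
Qed.

Lemma expansion_natE d i :
  expansion d i = (\sum_(k < i) d k * b ^ (i - k.+1))%N%:R * b%:R ^- i.
Proof.
rewrite natr_sum mulr_suml; apply: eq_bigr => k _.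
have b_neq0 : b%:R != 0 :> R by rewrite pnatr_eq0 -lt0n ltnW.
have -> : b%:R ^+ i = b%:R ^+ (i - k.+1) * b%:R ^+ k.+1 :> R.
  by rewrite -exprD subnK.
by rewrite natrM natrX; field; rewrite !expf_neq0.
Qed.

Lemma cylinder_near_grid {i c x p t} : cylinder i c x ->
  `|x - p%:R / b%:R ^+ i| < t -> exists left, cylinder_near left i c t x.
Proof.
move=> cx px; have /andP[x_lo x_hi] := cylinder_bounds cx.
have m_ge0 := cantor_margin_ge0 i.
case: (cx) => d _; rewrite expansion_natE => cE.
set Q := (\sum_(k < i) _)%N in cE; set h := b%:R ^- i in x_hi cE px.
have h_ge0 : 0 <= h by rewrite invr_ge0 exprn_ge0 // ltW.
have x_in : Q%:R * h <= x <= Q.+1%:R * h.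
  by rewrite -natr1 mulrDl mul1r cE; apply/andP; split; lra.
have [close|close] := grid_endpoint_closer Q p h_ge0 x_in;
  [exists true | exists false]; split => //=; rewrite /cylinder_end -cE.
  exact: le_lt_trans close px.
by rewrite -natr1 mulrDl mul1r in close; exact: le_lt_trans close px.
Qed.

Lemma card_words i : #|{: {ffun 'I_i -> {k | k \in D}}}| = (#|D| ^ i)%N.
Proof. by rewrite card_ffun card_ord card_sig. Qed.

Definition word_value {i} (w : {ffun 'I_i -> {k | k \in D}}) : R :=
  \sum_(k < i) (val (w k) : nat)%:R / b%:R ^+ k.+1.

Lemma expansion_word {d : nat -> 'I_b} (i : nat) : (forall k, d k \in D) ->
  exists w : {ffun 'I_i -> {k | k \in D}}, word_value w = expansion d i.
Proof.
by move=> dD; exists [ffun k : 'I_i => Sub (d k) (dD k)]; apply: eq_bigr => k _; rewrite ffunE.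
Qed.

Lemma cylinder_level_sum {f : R -> R} {i : nat} {t : R} : cantor_margin i < t ->
  (forall r, 0 < r -> 0 < f r) -> {in `]0, +oo[ &, {homo f : x y / x <= y}} ->
  (\sum_(p : bool * {ffun 'I_i -> {k | k \in D}})
      fdiam f (cylinder_near p.1 i (word_value p.2) t)
    <= ((2 * #|D| ^ i)%:R * f (t - cantor_margin i))%:E)%E.
Proof.
move=> margin_lt f_gt0 f_mono; have t_gt0 : 0 < t - cantor_margin i by rewrite subr_gt0.
apply: le_trans (_ : \sum_(p : bool * _) (f (t - cantor_margin i))%:E <= _)%E.
  by apply: lee_sum => p _; apply: fdiam_le => //; exact: diam_cylinder_near.
by rewrite sumEFin sumr_const card_prod card_bool card_words mulr_natl.
Qed.

Lemma cantor_W_near_cylinders {a : nat -> nat} {psi : nat -> R} :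
  (forall n1 n2, (0 < n1)%N -> (n1 <= n2)%N -> (a n1 <= a n2)%N) ->
  (forall M, exists2 n, (0 < n)%N & (M < a n)%N) ->
  forall x, (W_set b a psi `&` @cantor_set R b D) x -> forall N, exists2 i, (N <= i)%N &
    (i \in idx_set a) && (cantor_margin i < psiA a psi i) /\
    exists p : bool * {ffun 'I_i -> {k | k \in D}},
      cylinder_near p.1 i (word_value p.2) (psiA a psi i) x.
Proof.
move=> a_mono a_unbnd x [Wx [_ [d [dD d_cvg]]]] N.
have [n0 n0_gt0 N_lt] := a_unbnd N.
have [p [n [n0n n_gt0 close]]] := W_set_index_unbounded (ltnW b_gt1) Wx n0.
have close_psiA := lt_le_trans close (psi_le_psiA psi a_mono a_unbnd _ n_gt0).
have cx : cylinder (a n) (expansion d (a n)) x by exists d.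
have [left near_x] := cylinder_near_grid cx close_psiA.
have [w w_val] := expansion_word (a n) dD.
exists (a n); first exact: leq_trans (ltnW N_lt) (a_mono _ _ n0_gt0 n0n).
split; last by exists (left, w); rewrite /= w_val.
by rewrite (cylinder_near_margin near_x) andbT; apply/mem_set; exists n.
Qed.

Lemma hausdorff_W_cantor_eq0 {a : nat -> nat} {f : R -> R} {psi : nat -> R} :
  (forall n1 n2, (0 < n1)%N -> (n1 <= n2)%N -> (a n1 <= a n2)%N) ->
  (forall M, exists2 n, (0 < n)%N & (M < a n)%N) ->
  (forall r, 0 < r -> 0 < f r) -> {in `]0, +oo[ &, {homo f : x y / x <= y}} ->
  (\sum_(i <oo | (i \in idx_set a) && (cantor_margin i < psiA a psi i)%R)
     ((#|D| ^ i)%:R * f (psiA a psi i - cantor_margin i))%:E < +oo)%E ->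
  hausdorff_measure f (W_set b a psi `&` @cantor_set R b D) = 0%E.
Proof.
move=> a_mono a_unbnd f_gt0 f_mono sum_fin.
pose P i := (i \in idx_set a) && (cantor_margin i < psiA a psi i).
pose V i (p : bool * {ffun 'I_i -> {k | k \in D}}) :=
  if P i then cylinder_near p.1 i (word_value p.2) (psiA a psi i) else set0.
have V_diam i p : (diam (V i p) <= (b%:R ^- i)%:E)%E.
  by rewrite /V; case: ifP => _; [exact: diam_cylinder_near_scale | exact: diam_set0].
apply: (hausdorff_cantelli _ V (fun i => b%:R ^- i)) => //.
- rewrite (_ : (fun i => _) = fun i => (b%:R^-1) ^+ i); last first.
    by apply/funext => i; rewrite exprVn.
  by apply: cvg_expr; rewrite ger0_norm ?invr_ge0 ?ltW // invf_lt1 ?ltr1n.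
- apply: le_lt_trans (_ : _ <= \sum_(i <oo | P i)
    (2%:E * ((#|D| ^ i)%:R * f (psiA a psi i - cantor_margin i))%:E))%E _.
    rewrite [leRHS]eseries_mkcond; apply: lee_nneseries => [i _ _|i _].
      by apply: sume_ge0 => p _; exact: fdiam_ge0 f_gt0 (V_diam i p).
    rewrite /V; case: ifP => [/andP[_ margin_lt]|_]; last first.
      by rewrite big1 // => p _; exact: fdiam_set0.
    apply: le_trans (cylinder_level_sum margin_lt f_gt0 f_mono) _.
    by rewrite -EFinM natrM mulrA.
  rewrite nneseriesZl ?lte_mul_pinfty // => i /andP[_ margin_lt].
  by rewrite lee_fin mulr_ge0 // ltW // f_gt0 // subr_gt0.
- move=> x Ex N; have [i Ni [Pi [p near_x]]] := cantor_W_near_cylinders a_mono a_unbnd _ Ex N.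
  by exists i => //; exists p; rewrite /V /P Pi.
Qed.

End cantor_cylinders.


Theorem lemma4p2 (R : realType) (b : nat) (D : {set 'I_b})
  (a : nat -> nat) (f : R -> R) (psi : nat -> R) :
  (3 <= b)%N ->
  (2 <= #|D|)%N -> (#|D| <= b.-1)%N ->
  let gamma : R := ln (#|D|%:R) / ln (b%:R) in
  let m : nat := minn (\big[minn/b]_(d in D) (d : nat))
                      (b.-1 - \max_(d in D) (d : nat)) in
  (forall n, (0 < n)%N -> (0 < a n)%N) ->
  (forall n1 n2, (0 < n1)%N -> (n1 <= n2)%N -> (a n1 <= a n2)%N) ->
  (forall M, exists2 n, (0 < n)%N & (M < a n)%N) ->
  dimension_function f ->
  monotonic_pos (fun r => r `^ (- gamma) * f r) ->
  (forall n, (0 < n)%N -> 0 < psi n) ->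
  (\sum_(i <oo | (i \in idx_set a) &&
                 (psiA a psi i > m%:R / ((b.-1)%:R * b%:R ^+ i))%R)
     ((f (psiA a psi i - m%:R / ((b.-1)%:R * b%:R ^+ i))
        * (b%:R `^ (i%:R * gamma)))%:E) < +oo)%E ->
  hausdorff_measure f (W_set b a psi `&` @cantor_set R b D) = 0%E.
Proof.
move=> b_ge3 D_ge2 _ gamma m _ a_mono a_unbnd [_ [f_mono [f_gt0 _]]] _ _ sum_fin.
have b_gt1 : (1 < b)%N by exact: leq_trans b_ge3.
have D_margin : forall k : 'I_b, k \in D -> (m <= k <= b.-1 - m)%N.
  exact: digit_margin (geq_minl _ _) (geq_minr _ _).
apply: (hausdorff_W_cantor_eq0 b_gt1 D_margin a_mono a_unbnd f_gt0 f_mono).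
move: sum_fin; under eq_eseriesr => i _ do
  rewrite powR_nat_logb ?(leq_trans _ D_ge2) // mulrC.
by [].
Qed.
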